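(* Let $p$ be a prime and $\mathcal H$ a finite relational structure. If $\mathcal H$ is congruence $p$-permutable, then $\mathcal H$ is strongly $p$-rectangular.
   Context: $\langle\mathcal H\rangle_p$ denotes the set of relations $p$-mpp-definable in $\mathcal H$, i.e. definable by formulas $\exists^{\equiv p}\mathbf y_1\cdots\exists^{\equiv p}\mathbf y_s\,\Phi$ with $\Phi$ a conjunction of atomic formulas over relations of $\mathcal H$ and equality, where $\exists^{\equiv p}\mathbf y\,\Psi(\mathbf x,\mathbf y)$ holds for $\mathbf a$ iff the number of $\mathbf b$ with $\Psi(\mathbf a,\mathbf b)$ is not divisible by $p$. For $\mathcal S\in\langle\mathcal H\rangle_p$ ($k$-ary), a $p$-congruence of $\mathcal S$ is a $2k$-ary relation in $\langle\mathcal H\rangle_p$ that is an equivalence relation on $\mathcal S$. For binary relations $\alpha,\beta$, $(\mathbf a,\mathbf b)\in\alpha\circ_p\beta$ iff the number of $\mathbf c$ with $(\mathbf a,\mathbf c)\in\alpha$ and $(\mathbf c,\mathbf b)\in\beta$ is not divisible by $p$. $\mathcal H$ is congruence $p$-permutable if $\alpha\circ_p\beta=\beta\circ_p\alpha$ for all $p$-congruences $\alpha,\beta$ of every $\mathcal S\in\langle\mathcal H\rangle_p$. A relation $\mathcal R$ of arity $n\ge2$ is rectangular if for every nonempty $I\subsetneq[n]$, whenever $(\mathbf a,\mathbf c),(\mathbf a,\mathbf d),(\mathbf b,\mathbf c)\in\mathcal R$ (with $\mathbf a,\mathbf b$ on coordinates $I$, $\mathbf c,\mathbf d$ on $[n]\setminus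 I$) also $(\mathbf b,\mathbf d)\in\mathcal R$. $\mathcal H$ is strongly $p$-rectangular if every relation of arity at least 2 in $\langle\mathcal H\rangle_p$ is rectangular. *)

From HB Require Import structures.
From mathcomp Require Import all_boot.

Set Implicit Arguments.
Unset Strict Implicit.
Unset Printing Implicit Defensive.

Record relstruct (D : finType) := RelStruct {
  sig_idx : finType;
  arity : sig_idx -> nat;
  rel : forall i : sig_idx, {set (arity i).-tuple D}
}.
Arguments arity {D} r i.
Arguments rel {D} r i.

Section MPP.
Variables (D : finType) (H : relstruct D) (p : nat).

Inductive atom (N : nat) : Type :=
| ARel (i : sig_idx H) (vs : (arity H i).-tuple 'I_N)
| AEq (x y : 'I_N).

(* ∃^{≡p} y_1 ... ∃^{≡p} y_s Φ, where each y_j is a tuple of k_j variables,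
   and Φ is a conjunction (list) of atoms over all variables in scope
   (the N free ones followed by the bound ones, in order). *)
Inductive mpp_formula (N : nat) : Type :=
| QF (Phi : seq (atom N))
| ExMod (k : nat) (f : mpp_formula (N + k)).

Definition atom_sat N (at_ : atom N) (a : N.-tuple D) : bool :=
  match at_ with
  | ARel i vs => [tuple of map (fun v => tnth a v) vs] \in rel H i
  | AEq x y => tnth a x == tnth a y
  end.

Fixpoint mpp_sat N (f : mpp_formula N) : N.-tuple D -> bool :=
  match f with
  | QF Phi => fun a => all (fun at_ => atom_sat at_ a) Phi
  | ExMod k g => fun a =>
      ~~ (p %| #|[set t : k.-tuple D | mpp_sat g (cat_tuple a t)]|)
  end.

Definition mpp_definable k (R : {set k.-tuple D}) : Prop :=
  exists f : mpp_formula k, forall a, (a \in R) = mpp_sat f a.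

Definition brel k (alpha : {set (k + k).-tuple D}) (a b : k.-tuple D) : bool :=
  cat_tuple a b \in alpha.

Definition p_congruence k (S : {set k.-tuple D}) (alpha : {set (k + k).-tuple D}) : Prop :=
  [/\ mpp_definable alpha,
      (forall a b, brel alpha a b -> (a \in S) && (b \in S)),
      (forall a, a \in S -> brel alpha a a),
      (forall a b, brel alpha a b -> brel alpha b a) &
      (forall a b c, brel alpha a b -> brel alpha b c -> brel alpha a c)].

Definition comp_p k (alpha beta : {set (k + k).-tuple D}) (a b : k.-tuple D) : bool :=
  ~~ (p %| #|[set c : k.-tuple D | brel alpha a c && brel beta c b]|).

Definition congruence_p_permutable : Prop :=
  forall k (S : {set k.-tuple D}) (alpha beta : {set (k + k).-tuple D}),
    mpp_definable S -> p_congruence S alpha -> p_congruence S beta ->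
    forall a b, comp_p alpha beta a b = comp_p beta alpha a b.

(* Rectangularity: for nonempty proper I ⊂ [n], writing tuples as (x on I, y
   on the complement): (a,c),(a,d),(b,c) ∈ R implies (b,d) ∈ R. *)
Definition rectangular n (R : {set n.-tuple D}) : Prop :=
  forall I : {set 'I_n}, I != set0 -> I != setT ->
  forall t_ac t_ad t_bc t_bd : n.-tuple D,
    (forall i, i \in I -> tnth t_ac i = tnth t_ad i) ->
    (forall i, i \in I -> tnth t_bc i = tnth t_bd i) ->
    (forall i, i \notin I -> tnth t_ac i = tnth t_bc i) ->
    (forall i, i \notin I -> tnth t_ad i = tnth t_bd i) ->
    t_ac \in R -> t_ad \in R -> t_bc \in R -> t_bd \in R.

Definition strongly_p_rectangular : Prop :=
  forall n (R : {set n.-tuple D}), 2 <= n -> mpp_definable R -> rectangular R.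

End MPP.

From HB Require Import structures.
From mathcomp Require Import all_boot.

Set Implicit Arguments.
Unset Strict Implicit.
Unset Printing Implicit Defensive.

(* Since p-mpp-definable relations are closed under conjunction and
   substitution of variables, for a definable R and a set J of coordinates,
   "agreeing on J" is a p-congruence alpha_J of R. For x, y in R, the only c
   with x alpha_J c alpha_{~J} y is the tuple taking its J-coordinates from x
   and the others from y; so the count defining x (alpha_J o_p alpha_{~J}) y
   is 1 or 0 according to whether this glued tuple lies in R. With x = (a,d)
   and y = (b,c), the two glued tuples are (a,c) and (b,d), and
   permutability of alpha_I and alpha_{~I} transfers membership in R from
   the first to the second. *)

Section Definability.
Variables (D : finType) (H : relstruct D) (p : nat).

Definition lift_ren N M k (s : 'I_N -> 'I_M) (i : 'I_(N + k)) : 'I_(M + k) :=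
  match split i with inl j => lshift k (s j) | inr j => rshift M j end.

Definition ren_atom N M (s : 'I_N -> 'I_M) (a : atom H N) : atom H M :=
  match a with
  | ARel i vs => ARel (map_tuple s vs)
  | AEq x y => AEq H (s x) (s y)
  end.

Fixpoint ren_formula N M (s : 'I_N -> 'I_M) (f : mpp_formula H N) :
    mpp_formula H M :=
  match f with
  | QF Phi => QF (map (ren_atom s) Phi)
  | ExMod k g => ExMod (ren_formula (@lift_ren _ _ k s) g)
  end.

Definition ren_tuple N M (s : 'I_N -> 'I_M) (a : M.-tuple D) : N.-tuple D :=
  [tuple tnth a (s i) | i < N].

Lemma ren_tuple_lift N M k (s : 'I_N -> 'I_M) (a : M.-tuple D) (t : k.-tuple D) :
  ren_tuple (@lift_ren _ _ k s) (cat_tuple a t) = cat_tuple (ren_tuple s a) t.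
Proof.
apply: eq_from_tnth => i; rewrite tnth_mktuple -(splitK i).
case: (split i) => j; rewrite /lift_ren unsplitK /=.
  by rewrite !tnth_lshift tnth_mktuple.
by rewrite !tnth_rshift.
Qed.

Lemma ren_tuple_lshift N k (a : N.-tuple D) (t : k.-tuple D) :
  ren_tuple (@lshift N k) (cat_tuple a t) = a.
Proof. by apply: eq_from_tnth => i; rewrite tnth_mktuple tnth_lshift. Qed.

Lemma ren_tuple_rshift N k (a : N.-tuple D) (t : k.-tuple D) :
  ren_tuple (@rshift N k) (cat_tuple a t) = t.
Proof. by apply: eq_from_tnth => i; rewrite tnth_mktuple tnth_rshift. Qed.

Lemma atom_sat_ren N M (s : 'I_N -> 'I_M) (at_ : atom H N) a :
  atom_sat (ren_atom s at_) a = atom_sat at_ (ren_tuple s a).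
Proof.
case: at_ => [i vs|x y] /=; last by rewrite !tnth_mktuple.
suff -> : [tuple of map (tnth a) (map_tuple s vs)] =
          [tuple of map (tnth (ren_tuple s a)) vs] by [].
apply: val_inj; rewrite /= -map_comp.
by apply: eq_map => v; rewrite /= tnth_mktuple.
Qed.

Lemma mpp_sat_ren N M (s : 'I_N -> 'I_M) f a :
  mpp_sat p (ren_formula s f) a = mpp_sat p f (ren_tuple s a).
Proof.
elim: f M s a => [N' Phi|N' k g IH] M s a /=.
  by rewrite all_map; apply: eq_all => at_; rewrite /= atom_sat_ren.
congr (~~ (_ %| _)); apply: eq_card => t.
by rewrite !inE IH ren_tuple_lift.
Qed.

(* A conjunct not mentioning the bound variables can be pulled out of
   [exists^{=p}]: it either keeps the count or makes it 0. *)
Lemma ndvdn_card_andb (T : finType) (P : pred T) (b : bool) :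
  ~~ (p %| #|[set t | b && P t]|) = b && ~~ (p %| #|[set t | P t]|).
Proof.
case: b => //=; rewrite (eq_card (B := pred0)) ?card0 ?dvdn0 // => t.
by rewrite inE.
Qed.

Fixpoint and_qf N (Phi : seq (atom H N)) (g : mpp_formula H N) :
    mpp_formula H N :=
  match g with
  | QF Psi => QF (Phi ++ Psi)
  | ExMod k g1 => ExMod (and_qf (map (ren_atom (@lshift _ k)) Phi) g1)
  end.

Lemma mpp_sat_and_qf N (Phi : seq (atom H N)) g a :
  mpp_sat p (and_qf Phi g) a =
  all (fun at_ => atom_sat at_ a) Phi && mpp_sat p g a.
Proof.
elim: g Phi a => [N' Psi|N' k g1 IH] Phi a /=; first by rewrite all_cat.
rewrite -ndvdn_card_andb; congr (~~ (_ %| _)); apply: eq_card => t.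
rewrite !inE IH all_map; congr (_ && _); apply: eq_all => at_.
by rewrite /= atom_sat_ren ren_tuple_lshift.
Qed.

Fixpoint and_formula N (f g : mpp_formula H N) : mpp_formula H N :=
  match f with
  | QF Phi => and_qf Phi g
  | ExMod k f1 => ExMod (and_formula f1 (ren_formula (@lshift _ k) g))
  end.

Lemma mpp_sat_and N (f g : mpp_formula H N) a :
  mpp_sat p (and_formula f g) a = mpp_sat p f a && mpp_sat p g a.
Proof.
elim: f g a => [N' Phi|N' k f1 IH] g a /=; first by rewrite mpp_sat_and_qf.
rewrite andbC -ndvdn_card_andb; congr (~~ (_ %| _)); apply: eq_card => t.
by rewrite !inE IH mpp_sat_ren ren_tuple_lshift andbC.
Qed.

Lemma mpp_definable_preim N M (s : 'I_N -> 'I_M) (R : {set N.-tuple D}) :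
  mpp_definable H p R -> mpp_definable H p [set a | ren_tuple s a \in R].
Proof.
by case=> f hf; exists (ren_formula s f) => a; rewrite inE mpp_sat_ren hf.
Qed.

Lemma mpp_definable_setI N (R S : {set N.-tuple D}) :
  mpp_definable H p R -> mpp_definable H p S -> mpp_definable H p (R :&: S).
Proof.
case=> f hf [g hg]; exists (and_formula f g) => a.
by rewrite inE mpp_sat_and hf hg.
Qed.

Lemma mpp_definable_eq_on n (J : {set 'I_n}) :
  mpp_definable H p
    [set t : (n + n).-tuple D |
      [forall i in J, tnth t (lshift n i) == tnth t (rshift n i)]].
Proof.
exists (QF [seq AEq H (lshift n i) (rshift n i) | i <- enum J]) => t.
rewrite inE /= all_map; apply/forall_inP/allP => [eqJ i | eqJ i iJ].
  by rewrite mem_enum => /eqJ.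
by apply: eqJ; rewrite mem_enum.
Qed.

End Definability.

Section AgreementCongruence.
Variables (D : finType) (H : relstruct D) (p n : nat) (R : {set n.-tuple D}).

Definition agree_rel (J : {set 'I_n}) : {set (n + n).-tuple D} :=
  [set t | ren_tuple (@lshift n n) t \in R] :&:
  [set t | ren_tuple (@rshift n n) t \in R] :&:
  [set t | [forall i in J, tnth t (lshift n i) == tnth t (rshift n i)]].

Definition glue (J : {set 'I_n}) (x y : n.-tuple D) : n.-tuple D :=
  [tuple if i \in J then tnth x i else tnth y i | i < n].

Lemma brel_agree_rel J x y :
  brel (agree_rel J) x y =
  [&& x \in R, y \in R & [forall i in J, tnth x i == tnth y i]].
Proof.
rewrite /brel !inE ren_tuple_lshift ren_tuple_rshift andbA.
congr (_ && _); apply: eq_forallb => i.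
by rewrite tnth_lshift tnth_rshift.
Qed.

Lemma p_congruence_agree_rel J :
  mpp_definable H p R -> p_congruence H p R (agree_rel J).
Proof.
move=> defR; split.
- by apply: mpp_definable_setI; first apply: mpp_definable_setI;
    [apply: mpp_definable_preim ..|apply: mpp_definable_eq_on].
- by move=> x y; rewrite brel_agree_rel => /and3P[-> ->].
- by move=> x xR; rewrite brel_agree_rel xR; apply/forall_inP.
- move=> x y; rewrite !brel_agree_rel => /and3P[-> -> /forall_inP eqJ].
  by apply/forall_inP => i /eqJ /eqP ->.
- move=> x y z; rewrite !brel_agree_rel.
  move=> /and3P[-> _ /forall_inP eqxy] /and3P[_ -> /forall_inP eqyz].
  by apply/forall_inP => i iJ; rewrite (eqP (eqxy i iJ)) eqyz.
Qed.

Lemma agree_rel_comp_set J x y :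
  [set c | brel (agree_rel J) x c && brel (agree_rel (~: J)) c y] =
  if [&& x \in R, y \in R & glue J x y \in R] then [set glue J x y] else set0.
Proof.
apply/setP => c; rewrite !inE !brel_agree_rel.
apply/andP/idP => [[/and3P[xR cR /forall_inP eqJ] /and3P[_ yR /forall_inP eqCJ]] | ].
  have -> : glue J x y = c.
    apply: eq_from_tnth => i; rewrite tnth_mktuple.
    by case: ifPn => iJ; [rewrite (eqP (eqJ i iJ)) | rewrite (eqP (eqCJ i _)) ?inE].
  by rewrite xR yR cR inE.
case: ifP => [/and3P[xR yR gR] | _]; last by rewrite inE.
rewrite inE => /eqP ->; rewrite xR yR gR; split.
  by apply/forall_inP => i iJ; rewrite tnth_mktuple iJ.
by apply/forall_inP => i; rewrite inE tnth_mktuple => /negbTE ->.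
Qed.

Lemma comp_p_agree_rel J x y : p != 1 ->
  comp_p p (agree_rel J) (agree_rel (~: J)) x y =
  [&& x \in R, y \in R & glue J x y \in R].
Proof.
move=> p_neq1; rewrite /comp_p agree_rel_comp_set.
by case: ifP; rewrite ?cards1 ?dvdn1 ?cards0 ?dvdn0.
Qed.

End AgreementCongruence.

Theorem lemma6p4 (p : nat) (D : finType) (H : relstruct D) :
  prime p -> congruence_p_permutable H p -> strongly_p_rectangular H p.
Proof.
move=> p_pr perm n R _ defR I _ _ tac tad tbc tbd.
move=> eqI_ac_ad eqI_bc_bd eqCI_ac_bc eqCI_ad_bd acR adR bcR.
have p_neq1 : p != 1 by rewrite gtn_eqF ?prime_gt1.
have glue_ac : glue I tad tbc = tac.
  apply: eq_from_tnth => i; rewrite tnth_mktuple.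
  by case: ifPn => iI; [rewrite eqI_ac_ad | rewrite eqCI_ac_bc].
have glue_bd : glue (~: I) tad tbc = tbd.
  apply: eq_from_tnth => i; rewrite tnth_mktuple inE.
  by case: ifPn => [iI | /negbNE iI]; [rewrite eqCI_ad_bd | rewrite eqI_bc_bd].
have := perm n R _ _ defR (p_congruence_agree_rel I defR)
  (p_congruence_agree_rel (~: I) defR) tad tbc.
rewrite comp_p_agree_rel // glue_ac -{2}(setCK I) comp_p_agree_rel // glue_bd.
by rewrite adR bcR acR => /= <-.
Qed.
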